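(* Let $a$ be a positive integer and let $L_{a,a} = \{C_{i,1} : 1 \le i \le a+1\} \cup \{C_{1,j} : 1 < j \le a+1\}$, an $L$ polyomino of size $n = 2a+1$. Then on the $n \times n$ board, $\mathrm{cp}_{\mathrm{fixed}}(L_{a,a}) = 1$.
   Context: For integers $i,j$, $C_{i,j}$ denotes the unit square cell in column $i$ and row $j$ of the integer grid (columns numbered left to right, rows numbered top to bottom). A polyomino is a finite set of cells; its size is its number of cells. For a polyomino $\mathcal{P}$ of size $n$ the board is $\mathbb{B} = \{C_{i,j} : 1 \le i,j \le n\}$. The shift of $\mathcal{P}$ by integers $(c,d)$ is $\mathcal{P}+(c,d) = \{C_{x+c,y+d} : C_{x,y} \in \mathcal{P}\}$; a fixed copy of $\mathcal{P}$ is any shift of $\mathcal{P}$ (no rotations or reflections). A set of polyominoes is a valid arrangement if each is contained in $\mathbb{B}$ and they are pairwise disjoint. A fixed packing of $\mathcal{P}$ is a set of fixed copies of $\mathcal{P}$ forming a valid arrangement such that adding any further fixed copy of $\mathcal{P}$ yields an invalid arrangement. The clumsy fixed packing number $\mathrm{cp}_{\mathrm{fixed}}(\mathcal{P})$ is the minimum number of polyominoes in a fixed packing of $\mathcal{P}$ on the $n \times n$ board. *)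

From Stdlib Require Import ZArith List Lia.
Import ListNotations.
Open Scope Z_scope.

(* A cell C_{i,j} is represented by the pair (i, j) : Z * Z
   (i = column, j = row). A polyomino is a finite set of cells,
   represented by a duplicate-free list of cells. *)
Definition cell := (Z * Z)%type.
Definition polyomino := list cell.

Definition in_shift (P : polyomino) (s : Z * Z) (x : cell) : Prop :=
  exists y, In y P /\ x = (fst y + fst s, snd y + snd s).

Definition in_board (n : Z) (x : cell) : Prop :=
  1 <= fst x <= n /\ 1 <= snd x <= n.

Definition copy_in_board (n : Z) (P : polyomino) (s : Z * Z) : Prop :=
  forall x, in_shift P s x -> in_board n x.

Definition copies_disjoint (P : polyomino) (s t : Z * Z) : Prop :=
  forall x, in_shift P s x -> ~ in_shift P t x.

Definition valid_arrangement (n : Z) (P : polyomino) (S : list (Z * Z)) : Prop :=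
  NoDup S /\
  (forall s, In s S -> copy_in_board n P s) /\
  (forall i j, (i < j)%nat -> (j < length S)%nat ->
     copies_disjoint P (nth i S (0,0)) (nth j S (0,0))).

Definition fixed_packing (n : Z) (P : polyomino) (S : list (Z * Z)) : Prop :=
  valid_arrangement n P S /\
  forall t, ~ In t S -> ~ valid_arrangement n P (t :: S).

Definition is_cp_fixed (P : polyomino) (k : nat) : Prop :=
  let n := Z.of_nat (length P) in
  (exists S, fixed_packing n P S /\ length S = k) /\
  (forall S, fixed_packing n P S -> (k <= length S)%nat).

(* L_{a,a} = {C_{i,1} : 1 <= i <= a+1} U {C_{1,j} : 1 < j <= a+1} *)
Definition L_poly (a : nat) : polyomino :=
  map (fun i => (Z.of_nat i + 1, 1)) (seq 0 (a + 1)) ++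
  map (fun j => (1, Z.of_nat j + 2)) (seq 0 a).

From Stdlib Require Import ZArith List Lia.
Import ListNotations.
Open Scope Z_scope.

(** A single copy on the board blocks every other copy as soon as it meets all
    copies that fit on the board; such a copy is a fixed packing on its own, and
    no packing is empty because that copy could be added.  For [L_{a,a}] on the
    [(2a+1) x (2a+1)] board the shifts that fit are exactly [(c, d)] with
    [0 <= c, d <= a].  Place the copy with corner [(1, a+1)]: its horizontal arm
    covers row [a+1], columns [1..a+1], and the vertical arm of the copy shifted
    by [(c, d)] covers column [1+c], rows [1+d..a+1+d]; they share the cell
    [(1+c, a+1)]. *)

Definition blocking_copy (n : Z) (P : polyomino) (s : Z * Z) : Prop :=
  copy_in_board n P s /\
  forall t, copy_in_board n P t -> exists x, in_shift P t x /\ in_shift P s x.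

Lemma valid_arrangement_singleton n P s :
  copy_in_board n P s -> valid_arrangement n P [s].
Proof.
  intros Hs; split; [|split].
  - constructor; [easy | constructor].
  - intros t [<- | []]; exact Hs.
  - intros i j Hij Hj; simpl in Hj; lia.
Qed.

Lemma valid_arrangement_pair n P t s :
  valid_arrangement n P [t; s] -> copy_in_board n P t /\ copies_disjoint P t s.
Proof.
  intros [_ [Hin Hdisj]]; split.
  - apply Hin; left; reflexivity.
  - exact (Hdisj 0%nat 1%nat ltac:(lia) ltac:(simpl; lia)).
Qed.

Lemma blocking_copy_fixed_packing n P s :
  blocking_copy n P s -> fixed_packing n P [s].
Proof.
  intros [Hs Hblock]; split.
  - now apply valid_arrangement_singleton.
  - intros t _ Hvalid.
    destruct (valid_arrangement_pair _ _ _ _ Hvalid) as [Ht Hdisj].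
    destruct (Hblock t Ht) as [x [Htx Hsx]].
    exact (Hdisj x Htx Hsx).
Qed.

Lemma fixed_packing_nonempty n P s :
  copy_in_board n P s -> ~ fixed_packing n P [].
Proof.
  intros Hs [_ Hmax].
  exact (Hmax s (fun H => H) (valid_arrangement_singleton _ _ _ Hs)).
Qed.

Lemma is_cp_fixed_blocking_copy P s :
  blocking_copy (Z.of_nat (length P)) P s -> is_cp_fixed P 1.
Proof.
  intros Hblock; split.
  - exists [s]; split; [now apply blocking_copy_fixed_packing | reflexivity].
  - intros [| t S] HS; simpl; [| lia].
    exfalso; exact (fixed_packing_nonempty _ _ _ (proj1 Hblock) HS).
Qed.

Lemma L_poly_length a : length (L_poly a) = (2 * a + 1)%nat.
Proof. unfold L_poly; rewrite length_app, !length_map, !length_seq; lia. Qed.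

Lemma in_L_poly a x y :
  In (x, y) (L_poly a) <->
  (y = 1 /\ 1 <= x <= Z.of_nat a + 1) \/ (x = 1 /\ 1 <= y <= Z.of_nat a + 1).
Proof.
  unfold L_poly; rewrite in_app_iff, !in_map_iff; split.
  - intros [[i [Hi Hseq]] | [j [Hj Hseq]]]; apply in_seq in Hseq;
      injection Hi || injection Hj; lia.
  - intros [[-> Hx] | [-> Hy]].
    + left; exists (Z.to_nat (x - 1)); split; [f_equal; lia | apply in_seq; lia].
    + destruct (Z.eq_dec y 1) as [-> | Hy1].
      * left; exists 0%nat; split; [reflexivity | apply in_seq; lia].
      * right; exists (Z.to_nat (y - 2)); split; [f_equal; lia | apply in_seq; lia].
Qed.

Lemma in_shift_L_poly a c d x y :
  in_shift (L_poly a) (c, d) (x, y) <->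
  (y = 1 + d /\ 1 + c <= x <= Z.of_nat a + 1 + c) \/
  (x = 1 + c /\ 1 + d <= y <= Z.of_nat a + 1 + d).
Proof.
  split.
  - intros [[u v] [Huv Hxy]]; injection Hxy; cbn [fst snd]; intros -> ->.
    apply in_L_poly in Huv; lia.
  - intros H; exists (x - c, y - d); split.
    + apply in_L_poly; lia.
    + cbn [fst snd]; f_equal; lia.
Qed.

Lemma L_poly_copy_in_board a c d :
  copy_in_board (2 * Z.of_nat a + 1) (L_poly a) (c, d) <->
  0 <= c <= Z.of_nat a /\ 0 <= d <= Z.of_nat a.
Proof.
  split.
  - intros Hboard.
    assert (Hright := Hboard (Z.of_nat a + 1 + c, 1 + d)).
    assert (Htop := Hboard (1 + c, Z.of_nat a + 1 + d)).
    rewrite in_shift_L_poly in Hright, Htop.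
    unfold in_board in Hright, Htop; cbn [fst snd] in Hright, Htop; lia.
  - intros Hcd [x y] Hxy; apply in_shift_L_poly in Hxy.
    unfold in_board; cbn [fst snd]; lia.
Qed.

Lemma L_poly_blocking_copy a :
  blocking_copy (2 * Z.of_nat a + 1) (L_poly a) (0, Z.of_nat a).
Proof.
  split.
  - apply L_poly_copy_in_board; lia.
  - intros [c d] Hcd; apply L_poly_copy_in_board in Hcd.
    exists (1 + c, Z.of_nat a + 1); rewrite !in_shift_L_poly; lia.
Qed.

Theorem theorem3 (a : nat) (ha : (0 < a)%nat) :
  length (L_poly a) = (2 * a + 1)%nat /\ is_cp_fixed (L_poly a) 1.
Proof.
  split; [apply L_poly_length |].
  apply is_cp_fixed_blocking_copy with (s := (0, Z.of_nat a)).
  replace (Z.of_nat (length (L_poly a))) with (2 * Z.of_nat a + 1)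
    by (rewrite L_poly_length; lia).
  apply L_poly_blocking_copy.
Qed.
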